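(* Let $G$ be a finite group and $p$ a prime. A super class function $\varphi\in C(G)$ is a mod $p$ resolving function for $G$ if and only if $\theta^{-1}(\varphi)$ lies in the image of the mark homomorphism $\rho\colon B(G)\to C(G)$ and $\theta^{-1}(\varphi)(K)=0$ for every $p$-hypoelementary subgroup $K\le G$.
   Context: $C(G)$ is the group of super class functions: integer-valued functions on the set of subgroups of $G$ that are constant on conjugacy classes. $B(G)$ is the Burnside ring of finite $G$-sets, and the mark homomorphism $\rho\colon B(G)\to C(G)$ is given by $\rho([G/K])(L)=|(G/K)^L|$. The map $\theta^{-1}\colon C(G)\to C(G)$ is $\theta^{-1}(f)(K)=\sum_{L\ge K}f(L)$, the sum over all subgroups $L$ of $G$ containing $K$ (its inverse $\theta$ is given by the Möbius function of the subgroup poset). $W_G(K)=N_G(K)/K$. A subgroup $H$ is $p$-hypoelementary if it has a normal $p$-subgroup $P$ with $H/P$ cyclic of order prime to $p$. A mod $p$ resolving function for $G$ is $\varphi\in C(G)$ such that (1) $|N_G(K)/K|$ divides $\varphi(K)$ for all $K\le G$, and (2) $\sum_{L\ge K}\varphi(L)=0$ for every $p$-hypoelementary $K\le G$. *)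

From HB Require Import structures.
From mathcomp Require Import all_boot all_order all_algebra all_fingroup all_solvable.
Set Implicit Arguments. Unset Strict Implicit. Unset Printing Implicit Defensive.
Import GRing.Theory Num.Theory.
Local Open Scope group_scope.

(* A function on subgroups is modelled as phi : {group gT} -> int; only its
   values on subgroups of G matter. *)

Definition super_class_fun (gT : finGroupType) (G : {group gT})
  (phi : {group gT} -> int) : Prop :=
  forall (H : {group gT}) (g : gT), H \subset G -> g \in G ->
    phi (H :^ g)%G = phi H.

Definition theta_inv (gT : finGroupType) (G : {group gT})
  (f : {group gT} -> int) (K : {group gT}) : int :=
  (\sum_(L : {group gT} | (L \subset G) && (K \subset L)) f L)%R.

(* |(G/K)^L| : number of left cosets xK (x in G) fixed by left mult. by L. *)
Definition marks (gT : finGroupType) (G K L : {group gT}) : nat :=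
  #|[set C in lcosets K G | [forall l in L, l *: C == C]]|.

(* f lies in the image of the mark homomorphism rho : B(G) -> C(G):
   f = rho(sum_K a_K [G/K]) for some integer coefficients a_K
   (K ranging over subgroups of G). *)
Definition in_mark_image (gT : finGroupType) (G : {group gT})
  (f : {group gT} -> int) : Prop :=
  exists a : {group gT} -> int,
    forall L : {group gT}, L \subset G ->
      f L = (\sum_(K : {group gT} | K \subset G) a K * (marks G K L)%:Z)%R.

Definition hypoelementary (p : nat) (gT : finGroupType) (H : {group gT}) : Prop :=
  exists P : {group gT},
    [/\ P <| H, p.-group P, cyclic (H / P) & coprime #|H / P| p].

Definition resolving (p : nat) (gT : finGroupType) (G : {group gT})
  (phi : {group gT} -> int) : Prop :=
  (forall K : {group gT}, K \subset G ->
     (#|'N_G(K) / K|%:Z %| phi K)%Z) /\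
  (forall K : {group gT}, K \subset G -> hypoelementary p K ->
     theta_inv G phi K = 0%R).

From mathcomp Require Import all_boot all_order all_algebra all_fingroup all_solvable.
From mathcomp Require Import zify.
Set Implicit Arguments. Unset Strict Implicit. Unset Printing Implicit Defensive.
Import GRing.Theory Num.Theory.
Local Open Scope group_scope.

(* Counting the x in G with L <= K^(x^-1) in two ways gives
   |(G/K)^L| = |W_G(K)| * #{H <= G : L <= H, H conjugate to K}, i.e.
   rho([G/K]) = theta^{-1}(|W_G(K)| 1_[K]).  Hence theta(rho(sum a_K [G/K]))
   is the class function H |-> sum_{K ~ H} a_K |W_G(K)|, whose values are
   divisible by |W_G(H)|; conversely a class function phi with |W_G(K)| | phi(K)
   is of that form, taking a_K = phi(K)/|W_G(K)| on one representative per
   class.  Since theta^{-1} is injective, theta^{-1}(phi) is in the image of rho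
   iff phi satisfies the divisibility condition; the hypoelementary condition
   appears verbatim on both sides. *)

Section Marks.
Variable gT : finGroupType.
Implicit Types G K L H : {group gT}.

Lemma lcoset_fixed K (x l : gT) : (l *: (x *: K) == x *: K) = (l \in K :^ x^-1).
Proof.
rewrite -lcosetM mem_conjgV; apply/eqP/idP => [fixed | lKx].
  have : l * x \in x *: K by rewrite -fixed lcoset_refl.
  by rewrite mem_lcoset conjgE.
by apply/lcoset_eqP; rewrite mem_lcoset -conjgE.
Qed.

Definition conj_transporter G K L := [set x in G | L \subset K :^ x^-1].

Definition conj_overgroups G K L :=
  [set H : {group gT} | [&& H \subset G, L \subset H & gval H \in K :^: G]].

Lemma card_transporter_marks G K L : K \subset G ->
  #|conj_transporter G K L| = (#|K| * marks G K L)%N.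
Proof.
move=> sKG; rewrite /marks mulnC; apply: card_uniform_partition.
  by move=> C; rewrite inE => /andP[/lcosetsP[x _ ->] _]; rewrite card_lcoset.
apply/and3P; split.
- apply/eqP/setP => y; apply/bigcupP/idP.
    case=> C; rewrite inE => /andP[/lcosetsP[x xG ->] /forall_inP fixC] yC.
    have yG : y \in G.
      by case/lcosetP: yC => k kK ->; rewrite groupM // (subsetP sKG).
    rewrite inE yG; apply/subsetP => l lL.
    by rewrite -lcoset_fixed (lcoset_eqP yC); apply: fixC.
  rewrite inE => /andP[yG sLK]; exists (y *: K); last exact: lcoset_refl.
  rewrite inE; apply/andP; split; first by apply/lcosetsP; exists y.
  by apply/forall_inP => l lL; rewrite lcoset_fixed (subsetP sLK).
- apply/trivIsetP => A B; rewrite !inE.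
  case/andP=> /lcosetsP[x _ ->] _; case/andP=> /lcosetsP[y _ ->] _ neqAB.
  apply/pred0P => z /=; apply/negbTE/negP => /andP[zx zy].
  by move: neqAB; rewrite -(lcoset_eqP zx) -(lcoset_eqP zy) eqxx.
- rewrite inE negb_and; apply/orP; left; apply/negP => /lcosetsP[x _ K0].
  by have := lcoset_refl K x; rewrite -K0 inE.
Qed.

Lemma conjsg_sub G K (y : gT) : K \subset G -> y \in G -> K :^ y \subset G.
Proof. by move=> sKG yG; rewrite -(conjGid yG) conjSg. Qed.

Lemma eq_conjsgV_norm K (x y : gT) : (K :^ x^-1 == K :^ y) = (y * x \in 'N(K)).
Proof.
rewrite -(inj_eq (@conjsg_inj _ x)) conjsgKV -conjsgM eq_sym.
by apply/eqP/normP.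
Qed.

Lemma card_transporter_conj G K L : K \subset G ->
  #|conj_transporter G K L| = (#|conj_overgroups G K L| * #|'N_G(K)|)%N.
Proof.
move=> sKG; rewrite -sum1_card.
rewrite (partition_big (fun x => (K :^ x^-1)%G) (mem (conj_overgroups G K L))) /=;
  last first.
  move=> x; rewrite !inE => /andP[xG sLK]; rewrite sLK conjsg_sub ?groupV //=.
  by apply: imset_f; rewrite groupV.
rewrite -sum_nat_const; apply: eq_bigr => H; rewrite inE => /and3P[_ sLH /imsetP[y yG defH]].
rewrite sum1dep_card -(card_lcoset 'N_G(K) y^-1); apply: eq_card => x.
rewrite [in RHS]mem_lcoset invgK inE [in RHS]inE groupMl // inE -val_eqE /=.
rewrite defH eq_conjsgV_norm inE; case xG: (x \in G) => //=.
case: (boolP (K :^ (y * x) \subset K)) => nKyx; rewrite ?andbF ?andbT //.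
have : y * x \in 'N(K) by rewrite inE.
by rewrite -eq_conjsgV_norm => /eqP ->; rewrite -defH.
Qed.

Lemma marksE G K L : K \subset G ->
  marks G K L = (#|'N_G(K) / K| * #|conj_overgroups G K L|)%N.
Proof.
move=> sKG; have sKN : K \subset 'N_G(K) by rewrite subsetI sKG normG.
rewrite card_quotient ?subsetIr //.
apply/eqP; rewrite -(eqn_pmul2l (cardG_gt0 K)) -card_transporter_marks //.
by rewrite card_transporter_conj // -(Lagrange sKN) mulnC -mulnA.
Qed.

Lemma card_weyl_conj G K H : K \subset G -> gval H \in K :^: G ->
  #|'N_G(H) / H| = #|'N_G(K) / K|.
Proof.
move=> sKG /imsetP[y yG ->].
rewrite !card_quotient ?subsetIr // normJ -{1}(conjGid yG) -conjIg.
exact: indexJg.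
Qed.

End Marks.

Section ThetaInverse.
Variable gT : finGroupType.
Implicit Types G K L H : {group gT}.
Local Open Scope ring_scope.

Lemma eq_theta_inv G (f g : {group gT} -> int) K :
  (forall L, L \subset G -> f L = g L) -> theta_inv G f K = theta_inv G g K.
Proof. by move=> efg; apply: eq_bigr => L /andP[sLG _]; apply: efg. Qed.

Lemma theta_inv_inj G (f g : {group gT} -> int) :
  (forall L, L \subset G -> theta_inv G f L = theta_inv G g L) ->
  forall K, K \subset G -> f K = g K.
Proof.
move=> efg K; move: {2}(#|G| - #|K|).+1 (ltnSn (#|G| - #|K|)) => n.
elim: n K => // n IHn K ltKn sKG.
pose over_K (h : {group gT} -> int) :=
  \sum_(L : {group gT} | ((L \subset G) && (K \subset L)) && (L != K)) h L.
have split_K h : theta_inv G h K = h K + over_K h.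
  by rewrite /theta_inv (bigD1 K) //= sKG subxx.
have := efg K sKG; rewrite !split_K.
suff -> : over_K f = over_K g by apply: addIr.
apply: eq_bigr => L /andP[/andP[sLG sKL] neLK].
have ltKL : (#|K| < #|L|)%N.
  by apply: proper_card; rewrite properEneq sKL andbT -val_eqE eq_sym.
have leLG := subset_leq_card sLG.
by apply: IHn sLG; lia.
Qed.

(* theta(rho(sum_K a_K [G/K])), see marksE. *)
Definition theta_rho G (a : {group gT} -> int) (H : {group gT}) : int :=
  \sum_(K : {group gT} | (K \subset G) && (gval H \in K :^: G))
     a K * (#|'N_G(K) / K|%g)%:Z.

Lemma rho_theta_inv G a L : L \subset G ->
  \sum_(K : {group gT} | K \subset G) a K * (marks G K L)%:Z
    = theta_inv G (theta_rho G a) L.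
Proof.
move=> sLG; rewrite /theta_inv /theta_rho.
rewrite (exchange_big_dep (fun K : {group gT} => K \subset G)) /=; last first.
  by move=> H K _ /andP[].
apply: eq_bigr => K sKG.
rewrite (eq_bigl (fun H => H \in conj_overgroups G K L)); last first.
  by move=> H; rewrite !inE sKG /= andbA.
by rewrite sumr_const marksE // PoszM mulrA -mulr_natr natz.
Qed.

Lemma dvdz_weyl_theta_rho G a H :
  ((#|'N_G(H) / H|%g)%:Z %| theta_rho G a H)%Z.
Proof.
apply: rpred_sum => K /andP[sKG HK].
by rewrite (card_weyl_conj sKG HK) dvdz_mull.
Qed.

End ThetaInverse.

Section ClassRepresentatives.
Variable gT : finGroupType.
Implicit Types G K H : {group gT}.
Local Open Scope ring_scope.

Lemma conjugates_refl G K : gval K \in K :^: G.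
Proof. by apply/imsetP; exists 1%g; rewrite ?group1 ?conjsg1. Qed.

Lemma conjugates_eq G K H : gval H \in K :^: G -> H :^: G = K :^: G.
Proof. by case/imsetP=> y yG ->; rewrite conjugates_conj lcoset_id. Qed.

Definition class_repr G K : {group gT} :=
  odflt K [pick H : {group gT} | gval H \in K :^: G].

Lemma class_repr_conj G K : gval (class_repr G K) \in K :^: G.
Proof.
rewrite /class_repr; case: pickP => [//|none].
by have := none K; rewrite conjugates_refl.
Qed.

Lemma class_repr_eq G K H : gval H \in K :^: G -> class_repr G H = class_repr G K.
Proof.
move=> HK; rewrite /class_repr (conjugates_eq HK); case: pickP => [//|none].
by have := none K; rewrite conjugates_refl.
Qed.

Lemma class_repr_sub G K : K \subset G -> class_repr G K \subset G.
Proof.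
by move=> sKG; case/imsetP: (class_repr_conj G K) => y yG ->; apply: conjsg_sub.
Qed.

Lemma super_class_fun_repr G K (phi : {group gT} -> int) :
  super_class_fun G phi -> K \subset G -> phi (class_repr G K) = phi K.
Proof.
move=> scf sKG; case/imsetP: (class_repr_conj G K) => y yG defH.
by rewrite (_ : class_repr G K = (K :^ y)%G) ?scf //; apply: val_inj.
Qed.

Definition repr_coeffs G (phi : {group gT} -> int) (K : {group gT}) : int :=
  if class_repr G K == K then (phi K %/ (#|'N_G(K) / K|%g)%:Z)%Z else 0.

Lemma theta_rho_repr_coeffs G (phi : {group gT} -> int) H :
  super_class_fun G phi ->
  (forall K, K \subset G -> ((#|'N_G(K) / K|%g)%:Z %| phi K)%Z) ->
  H \subset G -> theta_rho G (repr_coeffs G phi) H = phi H.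
Proof.
move=> scf dvd_phi sHG; set R := class_repr G H.
have sRG : R \subset G by apply: class_repr_sub.
have HR : gval H \in R :^: G.
  by rewrite (conjugates_eq (class_repr_conj G H)) conjugates_refl.
rewrite /theta_rho (bigD1 R) /=; last by rewrite sRG HR.
rewrite /repr_coeffs (class_repr_eq (class_repr_conj G H)) eqxx divzK ?dvd_phi //.
rewrite super_class_fun_repr // big1 ?addr0 // => K /andP[/andP[sKG HK] neKR].
by rewrite -(class_repr_eq HK) eq_sym (negbTE neKR) mul0r.
Qed.

End ClassRepresentatives.

Theorem lemma3p10 (gT : finGroupType) (G : {group gT}) (p : nat)
  (phi : {group gT} -> int) :
  prime p -> super_class_fun G phi ->
  (resolving p G phi <->
   (in_mark_image G (theta_inv G phi) /\
    (forall K : {group gT}, K \subset G -> hypoelementary p K ->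
       theta_inv G phi K = 0%R))).
Proof.
move=> _ scf; split=> [[dvd_phi hypo0] | [[a rho_a] hypo0]]; split=> //.
  exists (repr_coeffs G phi) => L sLG; rewrite rho_theta_inv //.
  by apply: eq_theta_inv => H sHG; rewrite theta_rho_repr_coeffs.
move=> K sKG; rewrite (@theta_inv_inj _ G phi (theta_rho G a)) //.
  exact: dvdz_weyl_theta_rho.
by move=> L sLG; rewrite rho_a // rho_theta_inv.
Qed.
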